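(* Let $N$ be a lattice, let $\sigma\subset N_{\mathbb R}=N\otimes_{\mathbb Z}\mathbb R$ be a strongly convex rational polyhedral cone, let $\Delta$ be a rational simplicial subdivision of $\sigma$, and let $v_1,\ldots,v_s$ be the primitive generators of the rays of $\Delta$. Then, in the quotient field of $\mathbb Z[N]$, \[ (1-x^{v_1})\cdots(1-x^{v_s})\cdot G_\sigma \;=\; H_\Delta+\sum_{\tau\in\Delta^{\mathrm{sing}}}\Bigl(B_\tau\cdot H_{\operatorname{lk}\tau}\cdot\prod_{v_i\notin\operatorname{Star}\tau}(1-x^{v_i})\Bigr). \]
   Context: $\mathbb Z[N]$ is the Laurent polynomial (group) ring of $N$, with monomials $x^v$ for $v\in N$. $G_\sigma=\sum_{v\in\sigma\cap N}x^v$ is the generating function of lattice points of $\sigma$ (a rational function). For a cone $\tau$ we write $v_i\in\tau$ to mean that $v_i$ generates a ray of $\tau$. Define $H_\Delta=\sum_{\tau\in\Delta}\bigl(\prod_{v_i\in\tau}x^{v_i}\cdot\prod_{v_j\notin\tau}(1-x^{v_j})\bigr)$, the sum over all cones of $\Delta$ (including the zero cone). A cone is unimodular if it is spanned by part of a basis of $N$; $\Delta^{\mathrm{sing}}$ is the set of cones of $\Delta$ that are not unimodular. For $\tau\in\Delta$ spanned by $v_1,\ldots,v_r$ (after renumbering), $\operatorname{Box}(\tau)=\{a_1v_1+\cdots+a_rv_r : 0<a_i<1\}$ and $B_\tau=\sum_{v\in\operatorname{Box}(\tau)\cap N}x^v$. The link $\operatorname{lk}\tau$ is the set of cones $\gamma\in\Delta$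 with $\gamma\cap\tau=0$ and $\gamma+\tau\in\Delta$; $v_j\in\operatorname{lk}\tau$ means $v_j$ generates a ray of some cone of $\operatorname{lk}\tau$, and $H_{\operatorname{lk}\tau}=\sum_{\gamma\in\operatorname{lk}\tau}\bigl(\prod_{v_i\in\gamma}x^{v_i}\cdot\prod_{v_j\in\operatorname{lk}\tau,\,v_j\notin\gamma}(1-x^{v_j})\bigr)$. $\operatorname{Star}\tau$ is the union of the maximal cones of $\Delta$ containing $\tau$, and $v_i\notin\operatorname{Star}\tau$ means $v_i$ does not generate a ray of any such cone. *)

(* Lattice N = Z^n (row vectors 'rV[int]_n), N_R = 'rV[R]_n
   for a real type R.  Laurent polynomials in Z[N] are finite formal sums
   (lists of (coefficient, exponent) pairs); formal (possibly infinite)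
   sums such as G_sigma and B_tau are coefficient functions N -> int. *)
From HB Require Import structures.
From mathcomp Require Import all_boot all_order all_algebra.
From mathcomp Require Import boolp reals.
Set Implicit Arguments. Unset Strict Implicit. Unset Printing Implicit Defensive.
Import Order.TTheory GRing.Theory Num.Theory.
Local Open Scope ring_scope.

Section Defs.
Variable n : nat.

Definition toR (R : realType) (w : 'rV[int]_n) : 'rV[R]_n :=
  map_mx (fun z : int => z%:~R) w.

Definition primitive (w : 'rV[int]_n) : Prop :=
  w != 0 /\ forall (k : int) (w' : 'rV[int]_n), w = k *: w' -> `|k| = 1.

Definition cone_of (R : realType) (I : finType) (S : {set I})
    (u : I -> 'rV[R]_n) (x : 'rV[R]_n) : Prop :=
  exists c : I -> R, (forall i, 0 <= c i) /\ x = \sum_(i in S) c i *: u i.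

Definition lpoly := seq (int * 'rV[int]_n).
Definition lcoef (p : lpoly) (w : 'rV[int]_n) : int :=
  \sum_(t <- p | t.2 == w) t.1.
Definition lone : lpoly := [:: (1, 0)].
Definition lmon (v : 'rV[int]_n) : lpoly := [:: (1, v)].
Definition l1m (v : 'rV[int]_n) : lpoly := [:: (1, 0); (-1, v)].
Definition lmul (p q : lpoly) : lpoly :=
  [seq (a.1 * b.1, a.2 + b.2) | a <- p, b <- q].
Definition lprod (I : finType) (A : {set I}) (F : I -> lpoly) : lpoly :=
  foldr (fun i acc => lmul (F i) acc) lone (enum A).
Definition lsum (I : finType) (A : {set I}) (F : I -> lpoly) : lpoly :=
  flatten [seq F i | i <- enum A].

(* product of a Laurent polynomial p with a formal sum f (coefficient
   function N -> int): coefficient of x^w *)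
Definition conv (p : lpoly) (f : 'rV[int]_n -> int) (w : 'rV[int]_n) : int :=
  \sum_(t <- p) t.1 * f (w - t.2).

Definition indic (P : 'rV[int]_n -> Prop) (w : 'rV[int]_n) : int :=
  if `[< P w >] then 1 else 0.

(* ---------- the simplicial fan Delta on rays v : 'I_s -> N ----------
   A cone of Delta is recorded by the set tau of indices of its rays;
   the cone itself is cone_of tau (toR \o v). *)
Variable s : nat.

Definition unimodular (R : realType) (v : 'I_s -> 'rV[int]_n)
    (tau : {set 'I_s}) : Prop :=
  exists B : 'M[int]_n, B \in unitmx /\ exists J : {set 'I_n},
    forall x : 'rV[R]_n,
      cone_of tau (fun i => toR R (v i)) x <->
      cone_of J (fun j => toR R (row j B)) x.

Definition link (D : {set {set 'I_s}}) (tau : {set 'I_s}) : {set {set 'I_s}} :=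
  [set g in D | (g :&: tau == set0) && (g :|: tau \in D)].

Definition link_rays (D : {set {set 'I_s}}) (tau : {set 'I_s}) : {set 'I_s} :=
  [set j | [exists g in link D tau, j \in g]].

Definition maximal_cone (D : {set {set 'I_s}}) (S : {set 'I_s}) : bool :=
  (S \in D) && [forall S' in D, ~~ (S \proper S')].

Definition not_in_star (D : {set {set 'I_s}}) (tau : {set 'I_s}) : {set 'I_s} :=
  [set i | [forall S, (maximal_cone D S && (tau \subset S)) ==> (i \notin S)]].

Definition H_fan (v : 'I_s -> 'rV[int]_n) (D : {set {set 'I_s}}) : lpoly :=
  lsum D (fun tau => lmul (lprod tau (fun i => lmon (v i)))
                          (lprod (~: tau) (fun j => l1m (v j)))).

Definition H_link (v : 'I_s -> 'rV[int]_n) (D : {set {set 'I_s}})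
    (tau : {set 'I_s}) : lpoly :=
  lsum (link D tau) (fun g => lmul (lprod g (fun i => lmon (v i)))
                          (lprod (link_rays D tau :\: g) (fun j => l1m (v j)))).

Definition box_indic (R : realType) (v : 'I_s -> 'rV[int]_n)
    (tau : {set 'I_s}) : 'rV[int]_n -> int :=
  indic (fun w => exists a : 'I_s -> R, (forall i, i \in tau -> 0 < a i < 1) /\
           toR R w = \sum_(i in tau) a i *: toR R (v i)).

End Defs.

From HB Require Import structures.
From mathcomp Require Import all_boot all_order all_algebra.
From mathcomp Require Import boolp reals.
Import Order.TTheory GRing.Theory Num.Theory.
Local Open Scope ring_scope.
Set Implicit Arguments. Unset Strict Implicit. Unset Printing Implicit Defensive.

(* Every lattice point of sigma lies in the relative interior of exactly one
   cone tau of Delta, as sum_(i in tau) c_i v_i with all c_i > 0; let g be the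
   set of indices with c_i non-integral.  Multiplying the generating function
   of the points of type (tau, g) by prod_(i in tau) (1 - x^v_i) reduces every
   coordinate to its first period and leaves x^(sum_(i in tau \ g) v_i) B_g.
   Writing tau = g + h with h in lk g and regrouping by g, the remaining
   factor prod_(j notin g + h) (1 - x^v_j) is the product over the rays of
   lk g outside h, as in H_lk g, times the product over the rays outside
   Star g: these are exactly the rays neither in g nor in lk g.
   The term g = 0 is H_Delta, and B_g = 0 for every nonzero unimodular g. *)

Section Convolution.
Variable n : nat.
Implicit Types (p q : lpoly n) (f : 'rV[int]_n -> int) (w : 'rV[int]_n).

Lemma conv_lmul p q f : conv (lmul p q) f = conv p (conv q f).
Proof.
apply: funext => w; rewrite /conv /lmul big_allpairs_dep /=.
apply: eq_bigr => a _; rewrite big_distrr /=; apply: eq_bigr => b _.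
by rewrite mulrA opprD addrA.
Qed.

Lemma conv_convC p q f : conv p (conv q f) = conv q (conv p f).
Proof.
apply: funext => w; rewrite /conv.
under eq_bigr do rewrite big_distrr.
rewrite exchange_big /=; apply: eq_bigr => b _; rewrite big_distrr /=.
apply: eq_bigr => a _; rewrite mulrCA; congr (_ * (_ * f _)).
by rewrite -!addrA [- _ + _]addrC.
Qed.

Lemma conv_lone f : conv (lone n) f = f.
Proof. by apply: funext => w; rewrite /conv big_seq1 /= mul1r subr0. Qed.

Lemma conv0 p : conv p (fun=> 0) = fun=> 0.
Proof. by apply: funext => w; rewrite /conv big1 // => t _; rewrite mulr0. Qed.

Lemma conv_sum (I : finType) (P : pred I) p (F : I -> 'rV[int]_n -> int) w :
  conv p (fun y => \sum_(i | P i) F i y) w = \sum_(i | P i) conv p (F i) w.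
Proof. by rewrite /conv; under eq_bigr do rewrite big_distrr; rewrite exchange_big. Qed.

Lemma conv_lsum (I : finType) (A : {set I}) (F : I -> lpoly n) f w :
  conv (lsum A F) f w = \sum_(i in A) conv (F i) f w.
Proof. by rewrite /conv /lsum big_flatten /= big_map big_enum. Qed.

Lemma conv_l1m u f w : conv (l1m u) f w = f w - f (w - u).
Proof. by rewrite /conv big_cons big_seq1 /= subr0 mul1r mulN1r. Qed.

Lemma conv_lmon u f w : conv (lmon u) f w = f (w - u).
Proof. by rewrite /conv big_seq1 /= mul1r. Qed.

Definition lprod_seq (I : Type) (r : seq I) (F : I -> lpoly n) : lpoly n :=
  foldr (fun i acc => lmul (F i) acc) (lone n) r.

Lemma lprodE (I : finType) (A : {set I}) F : lprod A F = lprod_seq (enum A) F.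
Proof. by []. Qed.

Lemma conv_lprod_seq_cat (I : Type) (r1 r2 : seq I) F f :
  conv (lprod_seq (r1 ++ r2) F) f = conv (lprod_seq r1 F) (conv (lprod_seq r2 F) f).
Proof.
elim: r1 f => [|x r IH] f /=; first by rewrite conv_lone.
by rewrite !conv_lmul IH.
Qed.

Lemma conv_lprod_seq_perm (I : eqType) (r1 r2 : seq I) F f :
  perm_eq r1 r2 -> conv (lprod_seq r1 F) f = conv (lprod_seq r2 F) f.
Proof.
elim: r1 r2 f => [|x r1 IH] r2 f; first by rewrite perm_sym => /perm_nilP ->.
move=> r12; have xr2 : x \in r2 by rewrite -(perm_mem r12) mem_head.
case/splitPr: xr2 r12 => r2a r2b r12.
have r1E : perm_eq r1 (r2a ++ r2b).
  by rewrite -(perm_cons x) (perm_trans r12) // -cat1s perm_catCA.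
rewrite /= conv_lmul (IH _ _ r1E) !conv_lprod_seq_cat /= conv_lmul.
exact: conv_convC.
Qed.

Lemma conv_lprodU (I : finType) (A B : {set I}) F f : [disjoint A & B] ->
  conv (lprod (A :|: B) F) f = conv (lprod A F) (conv (lprod B F) f).
Proof.
move=> dAB; rewrite !lprodE -conv_lprod_seq_cat; apply: conv_lprod_seq_perm.
apply: uniq_perm; first exact: enum_uniq.
  rewrite cat_uniq !enum_uniq /= andbT; apply/hasPn => x.
  rewrite !mem_enum => xB; apply/negP => xA.
  by move: dAB; rewrite disjoint_subset => /subsetP /(_ x xA); rewrite inE xB.
by move=> x; rewrite mem_cat !mem_enum in_setU.
Qed.

Lemma conv_lprod_lmon (I : finType) (A : {set I}) (u : I -> 'rV[int]_n) f w :
  conv (lprod A (fun i => lmon (u i))) f w = f (w - \sum_(i in A) u i).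
Proof.
rewrite lprodE -big_enum; elim: (enum A) f w => [|x r IH] f w /=.
  by rewrite conv_lone big_nil subr0.
by rewrite conv_lmul conv_lmon IH big_cons opprD addrA.
Qed.

End Convolution.

Section LatticeToReal.
Variables (R : realType) (n : nat).

Lemma toR0 : toR R (0 : 'rV[int]_n) = 0.
Proof. exact: map_mx0. Qed.

Lemma toRB (a b : 'rV[int]_n) : toR R (a - b) = toR R a - toR R b.
Proof. exact: map_mxB. Qed.

Lemma toR_sum (I : finType) (P : pred I) (F : I -> 'rV[int]_n) :
  toR R (\sum_(i | P i) F i) = \sum_(i | P i) toR R (F i).
Proof. exact: map_mx_sum. Qed.

Lemma toR_inj : injective (@toR n R).
Proof.
move=> a b /matrixP ab; apply/matrixP => i j.
by move: (ab i j); rewrite !mxE; apply: intr_inj.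
Qed.

Lemma toR_mul (y : 'rV[int]_n) (B : 'M[int]_n) :
  toR R (y *m B) = toR R y *m map_mx (intmul (1 : R)) B.
Proof. exact: map_mxM. Qed.

Lemma toR_delta (j k : 'I_n) : toR R (delta_mx 0 j) 0 k = (k == j)%:R.
Proof. by rewrite !mxE eqxx; case: (k == j). Qed.

Lemma sum_scale_delta (I : finType) (S : {set I}) (a : I -> 'rV[R]_n) i :
  i \in S -> \sum_(k in S) (k == i)%:R *: a k = a i.
Proof.
move=> iS; rewrite (bigD1 i) //= eqxx scale1r big1 ?addr0 // => k /andP[_ /negbTE->].
by rewrite scale0r.
Qed.

Lemma sum_scale_shift (I : finType) (S : {set I}) (c : I -> R) (a : I -> 'rV[R]_n) i d :
  i \in S ->
  \sum_(k in S) (if k == i then c k + d else c k) *: a k =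
  \sum_(k in S) c k *: a k + d *: a i.
Proof.
move=> iS; rewrite (bigD1 i) //= [in RHS](bigD1 i) //= eqxx scalerDl.
rewrite addrAC; congr (_ + _ + _).
by apply: eq_bigr => k /andP[_ /negbTE->].
Qed.

Lemma indep_coord_uniq (I : finType) (S : {set I}) (a : I -> 'rV[R]_n) (c c' : I -> R) :
  (forall e : I -> R, \sum_(i in S) e i *: a i = 0 -> forall i, i \in S -> e i = 0) ->
  \sum_(i in S) c i *: a i = \sum_(i in S) c' i *: a i ->
  forall i, i \in S -> c i = c' i.
Proof.
move=> indep cc' i iS; apply/eqP; rewrite -subr_eq0; apply/eqP.
apply: (indep (fun i => c i - c' i)) iS.
by under eq_bigr do rewrite scalerBl; rewrite sumrB cc' subrr.
Qed.

Lemma cone_of_gen (I : finType) (S : {set I}) (a : I -> 'rV[R]_n) i :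
  i \in S -> cone_of S a (a i).
Proof.
move=> iS; exists (fun k => (k == i)%:R); split; first by move=> k; exact: ler0n.
by rewrite sum_scale_delta.
Qed.

Lemma not_int_01 (x : R) : 0 < x < 1 -> x \isn't a Num.int.
Proof.
case/andP=> x0 x1; apply/negP => /norm_intr_ge1 /(_ (lt0r_neq0 x0)).
by rewrite gtr0_norm // leNgt x1.
Qed.

Lemma int_ge1 (x : R) : x \is a Num.int -> 0 < x -> 1 <= x.
Proof. by move=> /norm_intr_ge1 xZ x0; rewrite -(gtr0_norm x0) xZ ?lt0r_neq0. Qed.

End LatticeToReal.

Section Pieces.
Variables (R : realType) (n s : nat) (v : 'I_s -> 'rV[int]_n) (D : {set {set 'I_s}}).
Hypothesis Hindep : forall S : {set 'I_s}, S \in D -> forall c : 'I_s -> R,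
  \sum_(i in S) c i *: toR R (v i) = 0 -> forall i, i \in S -> c i = 0.
Implicit Types (tau g rho : {set 'I_s}) (w : 'rV[int]_n) (i j : 'I_s) (x : R).

(* [piece tau g rho] is the set of lattice points [sum_(i in tau) c_i v_i]
   whose coordinate [c_i] is non-integral exactly for [i] in [g], each
   coordinate with index in [rho] being reduced to its first period:
   [0 < c_i < 1] if [i \in g], [c_i = 1] otherwise.  For [rho = set0] and [g]
   ranging over the subsets of [tau] these sets partition the lattice points of
   the relative interior of [tau]; for [rho = tau] one gets [Box(g)] translated
   by [sum_(i in tau :\: g) v_i]. *)
Definition piece_coord g rho i x : bool :=
  if i \in g then
    if i \in rho then 0 < x < 1 else (0 < x) && (x \isn't a Num.int)
  else
    if i \in rho then x == 1 else (x \is a Num.int) && (1 <= x).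

Definition piece tau g rho w : Prop :=
  exists2 c : 'I_s -> R, (forall i, i \in tau -> piece_coord g rho i (c i))
    & toR R w = \sum_(i in tau) c i *: toR R (v i).

Lemma piece_coord_setU1_neq g rho i j x :
  j != i -> piece_coord g (i |: rho) j x = piece_coord g rho j x.
Proof. by move=> ji; rewrite /piece_coord in_setU1 (negbTE ji). Qed.

Lemma piece_coord_setU1 g rho i x : i \notin rho ->
  piece_coord g (i |: rho) i x -> piece_coord g rho i x.
Proof.
rewrite /piece_coord setU11 => /negbTE->; case: (i \in g) => [x01|/eqP->].
  by rewrite not_int_01 ?andbT //; case/andP: x01.
by rewrite rpred1 lexx.
Qed.

Lemma piece_coord_gt0 g rho i x : i \notin rho -> piece_coord g rho i x -> 0 < x.
Proof.
rewrite /piece_coord => /negbTE->; case: (i \in g) => /andP[] // _.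
exact: lt_le_trans.
Qed.

Lemma piece_coord_le1 g rho i x : piece_coord g (i |: rho) i x -> x <= 1.
Proof. by rewrite /piece_coord setU11; case: (i \in g) => [/andP[_ /ltW]|/eqP->]. Qed.

Lemma piece_coordD1 g rho i x : i \notin rho ->
  piece_coord g rho i x -> piece_coord g rho i (x + 1).
Proof.
rewrite /piece_coord => /negbTE->; case: (i \in g) => /andP[x0 x1].
  by rewrite addr_gt0 // rpredDr ?rpred1.
by rewrite rpredD ?rpred1 // lerDr (le_trans _ x1).
Qed.

Lemma piece_coordB1 g rho i x : i \notin rho -> piece_coord g rho i x ->
  ~~ piece_coord g (i |: rho) i x -> piece_coord g rho i (x - 1).
Proof.
rewrite /piece_coord setU11 => /negbTE->; case: (i \in g) => /andP[x0 x1].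
  rewrite x0 /= -leNgt => x_ge1.
  rewrite rpredBr ?rpred1 // x1 andbT subr_gt0 lt_neqAle x_ge1 andbT.
  by apply: contraNneq x1 => <-; rewrite rpred1.
move=> x_neq1; have x_gt1 : 1 < x by rewrite lt_neqAle eq_sym x_neq1.
by rewrite rpredB ?rpred1 // int_ge1 ?rpredB ?rpred1 ?subr_gt0.
Qed.

Lemma piece_setU1 tau g rho i w :
  i \notin rho -> piece tau g (i |: rho) w -> piece tau g rho w.
Proof.
move=> irho [c cP wE]; exists c => // j jt.
have [ji|ji] := eqVneq j i.
  by rewrite ji in jt *; exact: piece_coord_setU1 (cP i jt).
by rewrite -(piece_coord_setU1_neq _ _ _ ji) cP.
Qed.

Lemma piece_setU1_shiftN tau g rho i w : tau \in D -> i \in tau -> i \notin rho ->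
  piece tau g (i |: rho) w -> ~ piece tau g rho (w - v i).
Proof.
move=> tD it irho [c cP wE] [c' c'P w'E].
have : toR R w = \sum_(j in tau) (if j == i then c' j + 1 else c' j) *: toR R (v j).
  by rewrite sum_scale_shift // -w'E toRB scale1r subrK.
rewrite wE => /(indep_coord_uniq (Hindep tD))/(_ i it); rewrite eqxx => ci.
have := piece_coord_le1 (cP i it); have := piece_coord_gt0 irho (c'P i it).
by rewrite ci gerDr leNgt => ->.
Qed.

Lemma piece_shift tau g rho i w : i \in tau -> i \notin rho ->
  ~ piece tau g (i |: rho) w -> piece tau g rho w <-> piece tau g rho (w - v i).
Proof.
move=> it irho nPw.
have shiftP c d : (forall j, j \in tau -> piece_coord g rho j (c j)) ->
    piece_coord g rho i (c i + d) ->
    forall j, j \in tau -> piece_coord g rho j (if j == i then c j + d else c j).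
  by move=> cP ciP j jt; case: eqP => [->//|_]; exact: cP.
split=> [[c cP wE]|[c cP wE]].
  have ciN : ~~ piece_coord g (i |: rho) i (c i).
    apply/negP => ciP; apply: nPw; exists c => // j jt.
    have [->//|ji] := eqVneq j i.
    by rewrite piece_coord_setU1_neq // cP.
  exists (fun j => if j == i then c j + -1 else c j).
    by apply: shiftP => //; apply: piece_coordB1 => //; exact: cP.
  by rewrite sum_scale_shift // toRB -wE scaleN1r.
exists (fun j => if j == i then c j + 1 else c j).
  by apply: shiftP => //; apply: piece_coordD1 => //; exact: cP.
by rewrite sum_scale_shift // -wE toRB scale1r subrK.
Qed.

Lemma conv_l1m_piece tau g rho i w : tau \in D -> i \in tau -> i \notin rho ->
  conv (l1m (v i)) (indic (piece tau g rho)) w = indic (piece tau g (i |: rho)) w.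
Proof.
move=> tD it irho; rewrite conv_l1m /indic.
case: (asboolP (piece tau g (i |: rho) w)) => [Pw|nPw].
  rewrite asboolT; last exact: piece_setU1 Pw.
  by rewrite asboolF ?subr0 //; exact: piece_setU1_shiftN.
by rewrite (asbool_equiv_eq (piece_shift it irho nPw)) subrr.
Qed.

Lemma conv_lprod_seq_l1m_piece tau g rho (r : seq 'I_s) : tau \in D -> uniq r ->
  {subset r <= tau} -> {in r, forall j, j \notin rho} ->
  conv (lprod_seq r (fun i => l1m (v i))) (indic (piece tau g rho)) =
  indic (piece tau g (rho :|: [set j in r])).
Proof.
move=> tD; elim: r => [|i r IH] /=.
  by move=> _ _ _; rewrite conv_lone setU0.
move=> /andP[ir ur] r_tau r_rho; rewrite conv_lmul IH //; last 2 first.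
- by move=> j jr; apply: r_tau; rewrite inE jr orbT.
- by move=> j jr; apply: r_rho; rewrite inE jr orbT.
apply: funext => w; rewrite conv_l1m_piece ?r_tau ?mem_head //; last first.
  by rewrite !inE negb_or r_rho ?mem_head.
by congr (indic _ w); congr piece; apply/setP => j; rewrite !inE orbCA.
Qed.

Lemma conv_lprod_l1m_piece tau g : tau \in D ->
  conv (lprod tau (fun i => l1m (v i))) (indic (piece tau g set0)) =
  indic (piece tau g tau).
Proof.
move=> tD; rewrite lprodE conv_lprod_seq_l1m_piece ?enum_uniq //.
- by congr (indic _); congr piece; apply/setP => j; rewrite !inE mem_enum.
- by move=> j; rewrite mem_enum.
- by move=> j; rewrite inE.
Qed.

Lemma piece_box tau g : g \subset tau ->
  indic (piece tau g tau) =
  conv (lprod (tau :\: g) (fun i => lmon (v i))) (box_indic R v g).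
Proof.
move=> gt; apply: funext => w; rewrite conv_lprod_lmon /box_indic /indic.
congr (if _ then _ else _); apply: asbool_equiv_eq.
have sumE c : {in tau :\: g, forall i, c i = 1} ->
    \sum_(i in tau) c i *: toR R (v i) =
    \sum_(i in g) c i *: toR R (v i) + toR R (\sum_(i in tau :\: g) v i).
  move=> c1; rewrite (big_setID g) /= (setIidPr gt) toR_sum; congr (_ + _).
  by apply: eq_bigr => i /c1->; rewrite scale1r.
split=> [[c cP wE]|[a [aP wE]]].
  exists c; split=> [i ig|].
    by have := cP i (subsetP gt i ig); rewrite /piece_coord ig (subsetP gt i ig).
  rewrite toRB wE sumE ?addrK // => i /setDP[it /negbTE ig].
  by have := cP i it; rewrite /piece_coord ig it => /eqP.
exists (fun i => if i \in g then a i else 1).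
  move=> i it; rewrite /piece_coord it.
  by case: (boolP (i \in g)) => ig; [exact: aP | exact: eqxx].
rewrite sumE => [|i /setDP[_ /negbTE->] //].
rewrite -[toR R w](subrK (toR R (\sum_(i in tau :\: g) v i))) -toRB wE.
by congr (_ + _); apply: eq_bigr => i ->.
Qed.

Hypothesis Hface : forall S T : {set 'I_s}, S \in D -> T \subset S -> T \in D.
Hypothesis Hinter : forall S T : {set 'I_s}, S \in D -> T \in D -> forall x : 'rV[R]_n,
  (cone_of S (fun i => toR R (v i)) x /\ cone_of T (fun i => toR R (v i)) x)
  <-> cone_of (S :&: T) (fun i => toR R (v i)) x.

Lemma piece_coord0_mem g i x :
  piece_coord g set0 i x -> (i \in g) = (x \isn't a Num.int).
Proof. by rewrite /piece_coord in_set0; case: (i \in g) => /andP[] => [_|] ->. Qed.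

Lemma piece0_cone tau g w :
  piece tau g set0 w -> cone_of tau (fun i => toR R (v i)) (toR R w).
Proof.
case=> c cP wE; exists (fun i => if i \in tau then c i else 0); split.
  move=> i; case: ifP => // it.
  by apply/ltW/(piece_coord_gt0 _ (cP i it)); rewrite inE.
by rewrite wE; apply: eq_bigr => i ->.
Qed.

(* [w] lies in the face [tau :&: tau'], and its coordinates on [tau] are unique. *)
Lemma piece0_subset tau tau' g g' w : tau \in D -> tau' \in D ->
  piece tau g set0 w -> piece tau' g' set0 w -> tau \subset tau'.
Proof.
move=> tD tD' Pw P'w.
have [d [_ wE]] := proj1 (Hinter tD tD' _) (conj (piece0_cone Pw) (piece0_cone P'w)).
case: Pw => c cP cE; apply/subsetP => i it.
have cdE : \sum_(j in tau) c j *: toR R (v j) =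
           \sum_(j in tau) (if j \in tau' then d j else 0) *: toR R (v j).
  rewrite -cE wE [RHS](big_setID tau') /= [X in _ = _ + X]big1 ?addr0.
    by apply: eq_bigr => j /setIP[_ ->].
  by move=> j /setDP[_ /negbTE->]; rewrite scale0r.
have ci_gt0 : 0 < c i by apply: piece_coord_gt0 (cP i it); rewrite inE.
move: ci_gt0; rewrite (indep_coord_uniq (Hindep tD) cdE it).
by case: ifP => // _; rewrite ltxx.
Qed.

Lemma piece0_uniq tau tau' g g' w : tau \in D -> tau' \in D ->
  g \subset tau -> g' \subset tau' ->
  piece tau g set0 w -> piece tau' g' set0 w -> tau = tau' /\ g = g'.
Proof.
move=> tD tD' gt gt' Pw P'w; have ett' : tau = tau'.
  apply/eqP; rewrite eqEsubset (piece0_subset tD tD' Pw P'w).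
  exact: piece0_subset tD' tD P'w Pw.
split=> //; subst tau'; case: Pw => c cP cE; case: P'w => c' c'P c'E.
have cc' := indep_coord_uniq (Hindep tD) (etrans (esym cE) c'E).
apply/setP => i; have [it|itN] := boolP (i \in tau).
  by rewrite (piece_coord0_mem (cP i it)) (piece_coord0_mem (c'P i it)) cc'.
by apply/idP/idP => [/(subsetP gt)|/(subsetP gt')]; rewrite (negbTE itN).
Qed.

Lemma piece0_exists S w : S \in D -> cone_of S (fun i => toR R (v i)) (toR R w) ->
  exists tau g, [/\ tau \in D, g \subset tau & piece tau g set0 w].
Proof.
move=> SD [c [c_ge0 wE]].
pose tau := [set i in S | 0 < c i]; pose g := [set i in tau | c i \isn't a Num.int].
have tS : tau \subset S by apply/subsetP => i; rewrite inE => /andP[].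
exists tau, g; split; first exact: Hface SD tS.
  by apply/subsetP => i; rewrite inE => /andP[].
exists c => [i it|].
  have ci_gt0 : 0 < c i by move: it; rewrite inE => /andP[].
  rewrite /piece_coord in_set0 inE it /=.
  by case: ifP => [->|/negbFE ciZ]; rewrite ?ci_gt0 ?ciZ ?int_ge1.
rewrite wE (big_setID tau) /= (setIidPr tS) [X in _ + X]big1 ?addr0 // => i.
case/setDP=> iS; rewrite inE iS /= => ciN.
have -> : c i = 0 by apply/eqP; rewrite eq_le c_ge0 andbT leNgt.
by rewrite scale0r.
Qed.

Lemma indic_cone_pieces (P : 'rV[R]_n -> Prop) :
  (forall z, P z <-> exists2 S, S \in D & cone_of S (fun i => toR R (v i)) z) ->
  indic (fun y => P (toR R y)) =
  (fun y => \sum_(tau in D) \sum_(g : {set 'I_s} | g \subset tau)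
    indic (piece tau g set0) y).
Proof.
move=> PE; apply: funext => y; rewrite {1}/indic.
have [Py|nPy] := asboolP (P (toR R y)); last first.
  rewrite big1 // => tau tD; rewrite big1 // => g _.
  rewrite /indic asboolF // => /piece0_cone Cy.
  by apply: nPy; apply/PE; exists tau.
have [S SD /piece0_exists[//|tau [g [tD gt Py']]]] := proj1 (PE _) Py.
have others_g :
    \sum_(g' : {set 'I_s} | (g' \subset tau) && (g' != g))
      indic (piece tau g' set0) y = 0.
  apply: big1 => g' /andP[g't g'g]; rewrite /indic asboolF // => P'y.
  by move: g'g; have [_ ->] := piece0_uniq tD tD gt g't Py' P'y; rewrite eqxx.
have others_tau : \sum_(tau' in D | tau' != tau)
    \sum_(g' : {set 'I_s} | g' \subset tau') indic (piece tau' g' set0) y = 0.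
  apply: big1 => tau' /andP[t'D t't]; apply: big1 => g' g't'.
  rewrite /indic asboolF // => P'y.
  by move: t't; have [-> _] := piece0_uniq tD t'D gt g't' Py' P'y; rewrite eqxx.
by rewrite (bigD1 tau) //= (bigD1 g) //= others_g others_tau /indic asboolT // !addr0.
Qed.

End Pieces.

Section FanCombinatorics.
Variables (s : nat) (D : {set {set 'I_s}}).
Hypothesis Hface : forall S T : {set 'I_s}, S \in D -> T \subset S -> T \in D.
Hypothesis Hrays : forall i, [set i] \in D.
Implicit Types (S T g h tau : {set 'I_s}).

Lemma maximal_cone_exists S : S \in D -> exists2 M, maximal_cone D M & S \subset M.
Proof.
move=> SD; have [|M /andP[MD SM] Mmax] := @arg_maxnP _ S
  (fun M => (M \in D) && (S \subset M)) (fun M => #|M|); first by rewrite SD subxx.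
exists M => //; apply/andP; split=> //; apply/forall_inP => S' S'D.
apply/negP => MS'; have := Mmax S'; rewrite S'D (subset_trans SM (proper_sub MS')).
by move=> /(_ isT) le; have := proper_card MS'; rewrite ltnNge (le : (#|S'| <= #|M|)%N).
Qed.

Lemma link_rays_disjoint g j : j \in link_rays D g -> j \notin g.
Proof.
rewrite inE => /existsP[h /andP[]]; rewrite inE => /and3P[_ /eqP hg _] jh.
apply/negP => jg; suff : j \in set0 by rewrite inE.
by rewrite -hg inE jh jg.
Qed.

Lemma link_set0 : link D set0 = D.
Proof. by apply/setP => g; rewrite !inE setI0 setU0 eqxx andbC andbb. Qed.

Lemma not_in_starE g : g \in D ->
  not_in_star D g = ~: (g :|: link_rays D g).
Proof.
move=> gD; apply/setP => i; rewrite !inE negb_or; apply/forallP/idP.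
- move=> iN; apply/andP; split.
    apply/negP => ig; have [M /andP[MD Mmax] gM] := maximal_cone_exists gD.
    by move: (iN M); rewrite /maximal_cone MD Mmax gM (subsetP gM i ig).
  apply/negP => /existsP[h /andP[]]; rewrite inE => /and3P[_ _ hgD] ih.
  have [M /andP[MD Mmax] hgM] := maximal_cone_exists hgD.
  move: (iN M); rewrite /maximal_cone MD Mmax (subset_trans (subsetUr h g) hgM).
  by rewrite (subsetP hgM) // inE ih.
- case/andP=> igN iLN M; apply/implyP => /andP[/andP[MD _] gM].
  apply: contra iLN => iM; apply/existsP; exists [set i].
  rewrite set11 andbT inE Hrays /=; apply/andP; split.
    by rewrite setI_eq0 disjoints1.
  apply: (Hface MD); apply/subsetP => j; rewrite !inE => /orP[/eqP->//|].
  exact: (subsetP gM).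
Qed.

Lemma sum_faces_link (V : nmodType) (F : {set 'I_s} -> {set 'I_s} -> V) :
  \sum_(tau in D) \sum_(g : {set 'I_s} | g \subset tau) F g (tau :\: g) =
  \sum_(g in D) \sum_(h in link D g) F g h.
Proof.
rewrite (exchange_big_dep (fun g => g \in D)) /=; last first.
  by move=> tau g tD gt; apply: Hface tD gt.
apply: eq_bigr => g gD.
rewrite (reindex_onto (fun h => h :|: g) (fun tau => tau :\: g)) /=; last first.
  move=> tau /andP[_ gt].
  by rewrite setDE setUIl [~: g :|: g]setUC setUCr setIT (setUidPl gt).
apply: eq_big => [h|h /andP[_ /eqP->] //].
rewrite !inE subsetUr andbT setDUl setDv setU0 (sameP eqP setDidPl) -setI_eq0.
have [hgD|] := boolP (h :|: g \in D); last by rewrite !andbF.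
by rewrite (Hface hgD (subsetUl h g)) andbT.
Qed.

End FanCombinatorics.

Lemma unimodular_set0 (R : realType) (n s : nat) (v : 'I_s -> 'rV[int]_n) :
  unimodular R v set0.
Proof.
exists 1%:M; split; first exact: unitmx1.
exists set0 => x; split; case=> c [_ ->]; rewrite big_set0;
  by exists (fun=> 0); split => //; rewrite big_set0.
Qed.

Section Unimodular.
Variables (R : realType) (n : nat).

Lemma extreme_ray_cone (I J : finType) (S : {set I}) (T : {set J})
    (a : I -> 'rV[R]_n) (b : J -> 'rV[R]_n) :
  (forall c : I -> R, \sum_(i in S) c i *: a i = 0 -> forall i, i \in S -> c i = 0) ->
  (forall x, cone_of S a x <-> cone_of T b x) ->
  forall i, i \in S -> exists2 j, j \in T & exists2 d, 0 < d & b j = d *: a i.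
Proof.
move=> indep coneE i iS.
(* Writing [a i] through the [b j] and these back through the [a k],
   independence forces [sum_j C_j d_jk = (k == i)]. *)
have [C [C_ge0 aiE]] := proj1 (coneE _) (cone_of_gen a iS).
have dP j : exists dj : I -> R, j \in T ->
    (forall k, 0 <= dj k) /\ b j = \sum_(k in S) dj k *: a k.
  have [jT|] := boolP (j \in T); last by exists (fun=> 0).
  by have [dj djP] := proj2 (coneE _) (cone_of_gen b jT); exists dj.
have [d {}dP] := choice dP.
pose M k := \sum_(j in T) C j * d j k.
have Cd_ge0 k j : j \in T -> 0 <= C j * d j k.
  by move=> jT; rewrite mulr_ge0 // (proj1 (dP j jT)).
have ME k : k \in S -> M k = (k == i)%:R.
  apply: (indep_coord_uniq (c' := fun k => (k == i)%:R) indep).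
  rewrite sum_scale_delta // aiE.
  under eq_bigr do rewrite scaler_suml.
  rewrite exchange_big /=; apply: eq_bigr => j jT.
  by rewrite (proj2 (dP j jT)) scaler_sumr; apply: eq_bigr => l _; rewrite scalerA.
have [j0 j0T Cd_gt0] : exists2 j0, j0 \in T & 0 < C j0 * d j0 i.
  have : M i != 0 by rewrite ME // eqxx oner_neq0.
  rewrite psumr_neq0 => [/hasP[j0 _ /andP[j0T]]|j]; [by exists j0 | exact: Cd_ge0].
have C_gt0 : 0 < C j0.
  by rewrite lt0r C_ge0 andbT; apply: contraTneq Cd_gt0 => ->; rewrite mul0r ltxx.
have d0 k : k \in S -> k != i -> d j0 k = 0.
  move=> kS ki; have Mk0 : M k = 0 by rewrite ME // (negbTE ki).
  move/eqP: (psumr_eq0P (Cd_ge0 k) Mk0 j0T).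
  by rewrite mulf_eq0 (gt_eqF C_gt0) => /eqP.
exists j0 => //; exists (d j0 i).
  rewrite lt0r (proj1 (dP j0 j0T)) andbT.
  by apply: contraTneq Cd_gt0 => ->; rewrite mulr0 ltxx.
rewrite (proj2 (dP j0 j0T)) (bigD1 i) //= big1 ?addr0 // => k /andP[kS ki].
by rewrite d0 // scale0r.
Qed.

Lemma primitive_row_unimodular (u : 'rV[int]_n) (B : 'M[int]_n) j (d : R) :
  primitive u -> B \in unitmx -> 0 < d ->
  toR R (row j B) = d *: toR R u -> u = row j B.
Proof.
move=> [_ uprim] BU d_gt0 bE.
have ejE : toR R (delta_mx 0 j) = d *: toR R (u *m invmx B).
  by rewrite toR_mul scalemxAl -bE -toR_mul rowE mulmxK.
set y := u *m invmx B in ejE.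
have uE : u = y *m B by rewrite /y mulmxKV.
clearbody y.
have ycoord k : (k == j)%:R = d * (y 0 k)%:~R.
  by move/matrixP: ejE => /(_ 0 k); rewrite toR_delta !mxE.
have yE : y = y 0 j *: delta_mx 0 j.
  apply/rowP => k; rewrite !mxE eqxx /=; have [->|kj] := eqVneq k j.
    by rewrite mulr1.
  move: (ycoord k); rewrite (negbTE kj) mulr0 /= => /esym/eqP.
  by rewrite mulf_eq0 (gt_eqF d_gt0) intr_eq0 => /eqP.
have y_gt0 : 0 < y 0 j.
  by rewrite -(ltr0z R) -(pmulr_rgt0 _ d_gt0) -ycoord eqxx ltr01.
have uE' : u = y 0 j *: row j B by rewrite uE {1}yE -scalemxAl -rowE.
by move: (uprim _ _ uE'); rewrite gtr0_norm // => y1; rewrite uE' y1 scale1r.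
Qed.

Variables (s : nat) (v : 'I_s -> 'rV[int]_n) (D : {set {set 'I_s}}).
Hypothesis Hindep : forall S : {set 'I_s}, S \in D -> forall c : 'I_s -> R,
  \sum_(i in S) c i *: toR R (v i) = 0 -> forall i, i \in S -> c i = 0.
Hypothesis Hprim : forall i, primitive (v i).
Hypothesis Hinj : injective v.

Lemma ray_of_unimodular g (B : 'M[int]_n) (J : {set 'I_n}) : g \in D -> B \in unitmx ->
  (forall x, cone_of g (fun i => toR R (v i)) x <->
             cone_of J (fun j => toR R (row j B)) x) ->
  forall i, i \in g -> exists j, v i = row j B.
Proof.
move=> gD BU coneE i ig.
have [j _ [d d_gt0 bE]] := extreme_ray_cone (Hindep gD) coneE ig.
by exists j; apply: primitive_row_unimodular (Hprim i) BU d_gt0 bE.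
Qed.

Lemma box_indic_unimodular g : g \in D -> g != set0 -> unimodular R v g ->
  box_indic R v g = fun=> 0.
Proof.
(* In the basis [B] the rays of [g] are distinct unit vectors, so a box point
   has the non-integral coordinate [a i0]. *)
move=> gD /set0Pn[i0 i0g] [B [BU [J coneE]]].
have [j0 vi0] := ray_of_unimodular gD BU coneE i0g.
have coord i : i \in g -> toR R (v i *m invmx B) 0 j0 = (i == i0)%:R.
  move=> ig; have [->|ii0] := eqVneq i i0.
    by rewrite vi0 rowE mulmxK // toR_delta eqxx.
  have [j vi] := ray_of_unimodular gD BU coneE ig.
  rewrite vi rowE mulmxK // toR_delta; case: eqVneq => // j0j.
  by case/eqP: ii0; apply: Hinj; rewrite vi vi0 j0j.
apply: funext => w; rewrite /box_indic /indic asboolF // => -[a [a01 wE]].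
have : toR R (w *m invmx B) 0 j0 = a i0.
  rewrite toR_mul wE mulmx_suml summxE (bigD1 i0) //= big1 ?addr0.
    by rewrite -scalemxAl mxE -toR_mul coord // eqxx mulr1.
  move=> i /andP[ig ii0].
  by rewrite -scalemxAl mxE -toR_mul coord // (negbTE ii0) mulr0.
by rewrite mxE => ai0; move: (not_int_01 (a01 i0 i0g)); rewrite -ai0 intr_int.
Qed.

End Unimodular.

Section Assembly.
Variables (R : realType) (n s : nat) (v : 'I_s -> 'rV[int]_n) (D : {set {set 'I_s}}).
Hypothesis Hindep : forall S : {set 'I_s}, S \in D -> forall c : 'I_s -> R,
  \sum_(i in S) c i *: toR R (v i) = 0 -> forall i, i \in S -> c i = 0.
Hypothesis Hface : forall S T : {set 'I_s}, S \in D -> T \subset S -> T \in D.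
Hypothesis Hinter : forall S T : {set 'I_s}, S \in D -> T \in D -> forall x : 'rV[R]_n,
  (cone_of S (fun i => toR R (v i)) x /\ cone_of T (fun i => toR R (v i)) x)
  <-> cone_of (S :&: T) (fun i => toR R (v i)) x.
Hypothesis Hrays : forall i, [set i] \in D.
Hypothesis Hprim : forall i, primitive (v i).
Hypothesis Hinj : injective v.
Implicit Types (g h tau : {set 'I_s}) (w : 'rV[int]_n).

Definition link_summand g h w :=
  conv (lprod (~: (g :|: h)) (fun i => l1m (v i)))
    (conv (lprod h (fun i => lmon (v i))) (box_indic R v g)) w.

Lemma conv_indic_support (P : 'rV[R]_n -> Prop) w :
  (forall z, P z <-> exists2 S, S \in D & cone_of S (fun i => toR R (v i)) z) ->
  conv (lprod [set: 'I_s] (fun i => l1m (v i))) (indic (fun y => P (toR R y))) w =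
  \sum_(tau in D) \sum_(g : {set 'I_s} | g \subset tau) link_summand g (tau :\: g) w.
Proof.
move=> PE; rewrite (indic_cone_pieces Hindep Hface Hinter PE) conv_sum.
apply: eq_bigr => tau tD; rewrite conv_sum; apply: eq_bigr => g gt.
have tauE : g :|: (tau :\: g) = tau.
  by rewrite setDE setUIr setUCr setIT (setUidPr gt).
rewrite -(setUCr tau) setUC conv_lprodU ?disjoints_subset //.
by rewrite (conv_lprod_l1m_piece Hindep) // (piece_box R v gt) /link_summand tauE.
Qed.

Lemma conv_link_box g w : g \in D ->
  conv (lmul (H_link v D g) (lprod (not_in_star D g) (fun i => l1m (v i))))
    (box_indic R v g) w =
  \sum_(h in link D g) link_summand g h w.
Proof.
move=> gD; rewrite conv_lmul /H_link conv_lsum; apply: eq_bigr => h hL.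
have hLR : h \subset link_rays D g.
  by apply/subsetP => j jh; rewrite inE; apply/existsP; exists h; rewrite hL.
have compE : (link_rays D g :\: h) :|: ~: (g :|: link_rays D g) = ~: (g :|: h).
  apply/setP => j; rewrite !(in_setD, in_setU, in_setC) !negb_or.
  have [jL|jLN] := boolP (j \in link_rays D g).
    by rewrite (negbTE (link_rays_disjoint jL)) /= andbT orbF.
  by rewrite (negbTE (contraNN (subsetP hLR j) jLN)) /= !andbT.
rewrite conv_lmul (not_in_starE Hface Hrays gD) -conv_lprodU; last first.
  rewrite disjoints_subset setCK; apply/subsetP => j /setDP[jL _].
  by rewrite in_setU jL orbT.
by rewrite compE /link_summand conv_convC.
Qed.

Lemma box_indic_set0 : box_indic R v set0 = fun y => (y == 0)%:R.
Proof.
apply: funext => y; rewrite /box_indic /indic; have [->|y0] := eqVneq y 0.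
  rewrite asboolT //; exists (fun=> 0); split=> [i|]; first by rewrite inE.
  by rewrite big_set0 toR0.
rewrite asboolF // => -[a [_]]; rewrite big_set0 -(toR0 R n) => /toR_inj y0'.
by rewrite y0' eqxx in y0.
Qed.

Lemma lcoef_H_fan w : lcoef (H_fan v D) w = \sum_(h in D) link_summand set0 h w.
Proof.
have lcoefE p : lcoef p w = conv p (box_indic R v set0) w.
  rewrite box_indic_set0 /lcoef /conv big_mkcond; apply: eq_bigr => t _.
  by rewrite subr_eq0 eq_sym; case: ifP => _; rewrite ?mulr1 ?mulr0.
rewrite lcoefE /H_fan conv_lsum; apply: eq_bigr => h _.
by rewrite conv_lmul /link_summand set0U conv_convC.
Qed.

Lemma link_summand_unimodular g h w : g \in D -> g != set0 -> unimodular R v g ->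
  link_summand g h w = 0.
Proof.
move=> gD g0 gU.
by rewrite /link_summand (box_indic_unimodular Hindep Hprim Hinj gD g0 gU) !conv0.
Qed.

End Assembly.

Theorem theorem1p1 (R : realType) (n m s : nat)
    (u : 'I_m -> 'rV[int]_n)            (* generators of the rational cone sigma *)
    (v : 'I_s -> 'rV[int]_n)            (* primitive ray generators of Delta *)
    (D : {set {set 'I_s}})              (* cones of Delta, by their ray sets *)
    (* sigma is strongly convex *)
    (Hsc : forall x : 'rV[R]_n,
        cone_of [set: 'I_m] (fun k => toR R (u k)) x ->
        cone_of [set: 'I_m] (fun k => toR R (u k)) (- x) -> x = 0)
    (* Delta is a simplicial fan with rays exactly the v_i *)
    (Hprim : forall i, primitive (v i))
    (Hinj : injective v)
    (H0 : set0 \in D)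
    (Hrays : forall i, [set i] \in D)
    (Hface : forall S T : {set 'I_s}, S \in D -> T \subset S -> T \in D)
    (Hindep : forall S : {set 'I_s}, S \in D -> forall c : 'I_s -> R,
        \sum_(i in S) c i *: toR R (v i) = 0 -> forall i, i \in S -> c i = 0)
    (Hinter : forall S T : {set 'I_s}, S \in D -> T \in D -> forall x : 'rV[R]_n,
        (cone_of S (fun i => toR R (v i)) x /\ cone_of T (fun i => toR R (v i)) x)
        <-> cone_of (S :&: T) (fun i => toR R (v i)) x)
    (* Delta subdivides sigma *)
    (Hsupp : forall x : 'rV[R]_n,
        cone_of [set: 'I_m] (fun k => toR R (u k)) x <->
        exists2 S, S \in D & cone_of S (fun i => toR R (v i)) x) :
  forall w : 'rV[int]_n,
    conv (lprod [set: 'I_s] (fun i => l1m (v i)))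
         (indic (fun y => cone_of [set: 'I_m] (fun k => toR R (u k)) (toR R y))) w
  = lcoef (H_fan v D) w
    + \sum_(tau in D | ~~ `[< unimodular R v tau >])
        conv (lmul (H_link v D tau) (lprod (not_in_star D tau) (fun i => l1m (v i))))
             (box_indic R v tau) w.
Proof.
move=> w; rewrite (conv_indic_support Hindep Hface Hinter w Hsupp).
rewrite (sum_faces_link Hface (fun g h => link_summand R v g h w)) /=.
rewrite (bigD1 set0) //= link_set0 (lcoef_H_fan R); congr (_ + _).
rewrite big_mkcond [RHS]big_mkcond; apply: eq_bigr => g _ /=.
have [gD|] := boolP (g \in D); last by [].
have [->|g0] := eqVneq g set0; first by rewrite asboolT //; exact: unimodular_set0.
have [gU|gN] := asboolP (unimodular R v g) => /=.
  by rewrite big1 // => h _; apply: (link_summand_unimodular Hindep Hprim Hinj).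
by rewrite (conv_link_box R v Hface Hrays).
Qed.
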